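(* Assume $\operatorname{char}k=0$ or $\operatorname{char}k>N$, and let $V$ have homogeneous basis $x_1,\dots,x_d$. There is a homomorphism of superbialgebras $\varphi\colon\underline{\operatorname{end}}\,\mathsf S_N(V)\to\mathcal O(\mathsf E(V))$ with $\varphi(z^i_j)=x^i_j$ for all $i,j$; restricting the coaction of $\underline{\operatorname{end}}\,\mathsf S_N(V)$ on $V$ along $\varphi$ gives the coaction $x_j\mapsto\sum_ix_i\otimes x^i_j$.
   Context: $\mathsf S_N(V)=\mathsf T(V)/(c_{Y_N}(V^{\otimes N}))$ with $Y_N=\frac1{N!}\sum\operatorname{sgn}(\sigma)\sigma$ acting by the signed permutation action $c_\sigma(v_1\otimes\cdots\otimes v_N)=(-1)^{\sum_{(i,j)\in\mathrm{inv}(\sigma)}\hat v_i\hat v_j}v_{\sigma^{-1}(1)}\otimes\cdots\otimes v_{\sigma^{-1}(N)}$. For $\mathcal A=A(V,R)=\mathsf T(V)/(R)$, $\underline{\operatorname{end}}\,\mathcal A$ is the superbialgebra generated by $z^i_j=x^i\otimes x_j$ (parity $\hat i+\hat j$) with relations $c_{\pi_N}(R^\perp\otimes R)\subseteq(V^*\otimes V)^{\otimes N}$, $\Delta(z^i_j)=\sum_kz^i_k\otimes z^k_j$, $\varepsilon(z^i_j)=\delta^i_j$, coacting on $\mathcal A$ by $x_j\mapsto\sum_ix_i\otimes z^i_j$; here $R^\perp$ is the annihilator for $\langle f_1\otimes\cdots\otimes f_N,v_N\otimes\cdots\otimes v_1\rangle=\prod\langle f_i,v_i\rangle$ and $c_{\pi_N}(f_1\otimes\cdots\otimes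 f_N\otimes v_1\otimes\cdots\otimes v_N)=(-1)^{\sum_i\sum_{j>i}\hat v_i\hat f_j}(f_1\otimes v_1)\otimes\cdots\otimes(f_N\otimes v_N)$. $\mathcal O(\mathsf E(V))=k[x^i_j]$ is the free supercommutative superbialgebra on $x^i_j$ of parity $\hat i+\hat j$ with $\Delta(x^i_j)=\sum_kx^i_k\otimes x^k_j$, $\varepsilon(x^i_j)=\delta^i_j$. *)

From HB Require Import structures.
From mathcomp Require Import all_boot all_order all_algebra all_fingroup.
Set Implicit Arguments. Unset Strict Implicit. Unset Printing Implicit Defensive.
Import GRing.Theory.
Local Open Scope ring_scope.

(* Formal linear combinations (finitely supported k-valued functions),      *)
(* represented as lists of (coefficient, basis element) pairs; two of them  *)
(* are equal when all their coefficients agree.                             *)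
Section FS.
Variable k : fieldType.

Definition fs (X : Type) := seq (k * X).

Definition coef (X : eqType) (s : fs X) (x : X) : k :=
  \sum_(t <- s) (if t.2 == x then t.1 else 0).

Definition fs_eq (X : eqType) (s t : fs X) := forall x, coef s x = coef t x.

Definition fscale (X : Type) (c : k) (s : fs X) : fs X :=
  [seq (c * t.1, t.2) | t <- s].

Definition fsub (X : Type) (s t : fs X) : fs X := s ++ fscale (-1) t.

Definition ftens (X Y : Type) (s : fs X) (t : fs Y) : fs (X * Y) :=
  [seq (a.1 * b.1, (a.2, b.2)) | a <- s, b <- t].

(* Free (tensor) algebra T(W) on a set of generators G: basis = words. *)
Definition fone (G : Type) : fs (seq G) := [:: (1, [::])].
Definition gen (G : Type) (g : G) : fs (seq G) := [:: (1, [:: g])].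
Definition fmul (G : Type) (s t : fs (seq G)) : fs (seq G) :=
  [seq (a.1 * b.1, a.2 ++ b.2) | a <- s, b <- t].

Definition parw (G : Type) (par : G -> bool) (w : seq G) : bool :=
  foldr (fun g b => par g (+) b) false w.

(* super tensor product T(W) (x) T(W), with the Koszul sign
   (a (x) b)(c (x) d) = (-1)^{|b||c|} ac (x) bd *)
Definition tone (G : Type) : fs (seq G * seq G) := [:: (1, ([::], [::]))].
Definition tmul (G : Type) (par : G -> bool) (s t : fs (seq G * seq G)) :
    fs (seq G * seq G) :=
  [seq ((-1) ^+ (parw par a.2.2 && parw par b.2.1) * (a.1 * b.1),
        (a.2.1 ++ b.2.1, a.2.2 ++ b.2.2)) | a <- s, b <- t].

Definition in_ideal (G : eqType) (Rel : fs (seq G) -> Prop) (x : fs (seq G)) :=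
  exists l : seq (fs (seq G) * fs (seq G) * fs (seq G)),
    (forall t, t \in l -> Rel t.1.2) /\
    fs_eq x (flatten [seq fmul (fmul t.1.1 t.1.2) t.2 | t <- l]).

(* the ideal I (x) T + T (x) I of T (x) T, I generated by Rel *)
Definition in_ideal2 (G : eqType) (Rel : fs (seq G) -> Prop)
    (x : fs (seq G * seq G)) :=
  exists l1 l2 : seq (fs (seq G) * fs (seq G) * fs (seq G) * fs (seq G)),
    (forall t, t \in l1 -> Rel t.1.1.2) /\
    (forall t, t \in l2 -> Rel t.1.1.2) /\
    fs_eq x (flatten [seq ftens (fmul (fmul t.1.1.1 t.1.1.2) t.1.2) t.2 | t <- l1]
             ++ flatten [seq ftens t.2 (fmul (fmul t.1.1.1 t.1.1.2) t.1.2) | t <- l2]).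

Definition phi_ext (GS GT : Type) (phi : GS -> fs (seq GT)) (s : fs (seq GS)) :
    fs (seq GT) :=
  flatten [seq fscale t.1 (foldr (fun g acc => fmul (phi g) acc) (fone GT) t.2)
          | t <- s].

Definition phiphi (GS GT : Type) (phi : GS -> fs (seq GT))
    (s : fs (seq GS * seq GS)) : fs (seq GT * seq GT) :=
  flatten [seq fscale t.1 (ftens (phi_ext phi [:: (1, t.2.1)])
                                 (phi_ext phi [:: (1, t.2.2)])) | t <- s].

Definition Dext (G : Type) (par : G -> bool) (D : G -> fs (seq G * seq G))
    (s : fs (seq G)) : fs (seq G * seq G) :=
  flatten [seq fscale t.1 (foldr (fun g acc => tmul par (D g) acc) (tone G) t.2)
          | t <- s].

Definition eext (G : Type) (e : G -> k) (s : fs (seq G)) : k :=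
  \sum_(t <- s) t.1 * \prod_(g <- t.2) e g.

(* A presented superbialgebra is given by generators GS with parities parS,
   relations RelS, and coproduct / counit on generators DS, eS (the algebra
   is T(W_S)/(RelS)).  [is_sbialg_hom ... phi] says that the assignment of
   images phi to generators defines a homomorphism of superbialgebras
   T(W_S)/(RelS) -> T(W_T)/(RelT): it is parity preserving, kills the
   relations (so is a well defined superalgebra map), and is compatible with
   coproducts and counits (it suffices to check these on generators, since
   all maps involved are superalgebra maps). *)
Definition is_sbialg_hom (GS GT : eqType) (parS : GS -> bool) (parT : GT -> bool)
    (RelS : fs (seq GS) -> Prop) (RelT : fs (seq GT) -> Prop)
    (DS : GS -> fs (seq GS * seq GS)) (DT : GT -> fs (seq GT * seq GT))
    (eS : GS -> k) (eT : GT -> k) (phi : GS -> fs (seq GT)) : Prop :=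
  [/\ forall g w, coef (phi g) w != 0 -> parw parT w = parS g,
      forall r, RelS r -> in_ideal RelT (phi_ext phi r),
      forall g, in_ideal2 RelT (fsub (Dext parT DT (phi g)) (phiphi phi (DS g)))
    & forall g, eext eT (phi g) = eS g].

End FS.

(* The specific objects: V with homogeneous basis x_1..x_d of parities p.   *)
Section EndS.
Variables (k : fieldType) (d N : nat) (p : 'I_d -> bool).

(* generators z^i_j of end, resp. x^i_j of O(E(V)), indexed by (i,j) *)
Definition Gen := ('I_d * 'I_d)%type.
Definition parG (g : Gen) : bool := p g.1 (+) p g.2.

(* basis words of V^{(x)N} : x_{w 1} (x) ... (x) x_{w N} *)
Definition Word := {ffun 'I_N -> 'I_d}.
Definition Ten := {ffun Word -> k}.

(* sign (-1)^{sum_{(i,j) in inv sigma} \hat v_i \hat v_j} *)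
Definition sgn_perm (s : 'S_N) (w : Word) : k :=
  (-1) ^+ (\sum_(i : 'I_N) \sum_(j : 'I_N | (i < j)%N && (s j < s i)%N)
              (p (w i) && p (w j)))%N.

Definition cperm (s : 'S_N) (t : Ten) : Ten :=
  [ffun w' => \sum_(w : Word)
      (if w' == [ffun i => w ((s^-1)%g i)] then sgn_perm s w * t w else 0)].

Definition cY (t : Ten) : Ten :=
  [ffun w => ((N`!)%:R)^-1 * \sum_(s : 'S_N) (-1) ^+ odd_perm s * cperm s t w].

Definition inR (v : Ten) : Prop := exists t, v = cY t.

(* (Vdual)^{(x)N} in the dual basis x^{a 1} (x) ... (x) x^{a N}; pairing
   <f_1 (x) .. (x) f_N, v_N (x) .. (x) v_1> = prod <f_i, v_i> *)
Definition revw (a : Word) : Word := [ffun i => a (rev_ord i)].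
Definition pairing (f v : Ten) : k := \sum_(a : Word) f a * v (revw a).
Definition inRperp (f : Ten) : Prop := forall v, inR v -> pairing f v = 0.

(* c_{pi_N}(f (x) v) as an element of T(Vdual (x) V), x^i (x) x_j = z^i_j *)
Definition sgn_pi (a b : Word) : k :=
  (-1) ^+ (\sum_(i : 'I_N) \sum_(j : 'I_N | (i < j)%N) (p (b i) && p (a j)))%N.
Definition zword (a b : Word) : seq Gen := [seq (a i, b i) | i <- enum 'I_N].
Definition cpi (f v : Ten) : fs k (seq Gen) :=
  [seq (f a * v b * sgn_pi a b, zword a b) | a <- enum {: Word}, b <- enum {: Word}].

Definition Rel_end (r : fs k (seq Gen)) : Prop :=
  exists f v, [/\ inRperp f, inR v & r = cpi f v].

(* relations of the free supercommutative algebra O(E(V)) = k[x^i_j] *)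
Definition Rel_O (r : fs k (seq Gen)) : Prop :=
  (exists g h : Gen, r = fsub (fmul (gen k g) (gen k h))
       (fscale ((-1) ^+ (parG g && parG h)) (fmul (gen k h) (gen k g))))
  \/ (exists g : Gen, parG g /\ r = fmul (gen k g) (gen k g)).

Definition DeltaGen (g : Gen) : fs k (seq Gen * seq Gen) :=
  [seq (1, ([:: (g.1, l)], [:: (l, g.2)])) | l <- enum 'I_d].
Definition epsGen (g : Gen) : k := (g.1 == g.2)%:R.

(* restriction along phi of the coaction x_j |-> sum_i x_i (x) z^i_j
   on V, as an element of V (x) T(W) *)
Definition coact_restr (phi : Gen -> fs k (seq Gen)) (j : 'I_d) :
    fs k ('I_d * seq Gen) :=
  flatten [seq [seq (c.1, (i, c.2)) | c <- phi (i, j)] | i <- enum 'I_d].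

Definition coact_target (j : 'I_d) : fs k ('I_d * seq Gen) :=
  [seq (1, (i, [:: (i, j)])) | i <- enum 'I_d].

End EndS.

From HB Require Import structures.
From mathcomp Require Import all_boot all_order all_algebra all_fingroup zify ring.
Import GRing.Theory.
Local Open Scope ring_scope.
Set Implicit Arguments. Unset Strict Implicit. Unset Printing Implicit Defensive.

(* The homomorphism is the identity on generators, phi(z^i_j) = x^i_j.
   Parity, coproduct, counit and the restricted coaction are then preserved
   on the nose; the only real content is that phi kills the relations of
   end S_N(V), i.e. that every c_{pi_N}(f (x) c_{Y_N} t) with f in R^perp
   lies in the ideal of supercommutativity relations of O(E(V)).

   The argument: expanding c_{Y_N} t over S_N writes the relation as a sum
   over triples (u, sigma, w) of scalars times the monomials
   z_{sigma u, sigma w} (the letters of the words u, w moved by sigma).  In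
   the supercommutative quotient each such monomial equals +-z_{u, w}
   (bubble sort: one adjacent Koszul swap at a time, counted by a weighted
   inversion number).  A parity computation shows that all signs combine
   to the sign of c_sigma on u times the sign of c_{pi_N} on (u, w), so the
   coefficient of z_{u, w} is a multiple of
   sum_sigma sgn(sigma) (sign of c_sigma on u) f(sigma u) / N!, which is the
   pairing of f with c_{Y_N} of a basis tensor, an element of R; it vanishes
   because f is in R^perp. *)

Section LinearCombinations.
Variable k : fieldType.

Lemma coef_nil (X : eqType) (x : X) : coef ([::] : fs k X) x = 0.
Proof. by rewrite /coef big_nil. Qed.

Lemma coef_cat (X : eqType) (s t : fs k X) x : coef (s ++ t) x = coef s x + coef t x.
Proof. by rewrite /coef big_cat. Qed.

Lemma coef_fscale (X : eqType) c (s : fs k X) x : coef (fscale c s) x = c * coef s x.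
Proof.
rewrite /coef /fscale big_map mulr_sumr; apply: eq_bigr => t _ /=.
by case: ifP; rewrite ?mulr0.
Qed.

Lemma coef_fsub (X : eqType) (s t : fs k X) x : coef (fsub s t) x = coef s x - coef t x.
Proof. by rewrite /fsub coef_cat coef_fscale mulN1r. Qed.

Lemma coef_single (X : eqType) (c : k) (w x : X) : coef [:: (c, w)] x = if w == x then c else 0.
Proof. by rewrite /coef big_cons big_nil addr0. Qed.

Lemma coef_flatten (I : Type) (X : eqType) (F : I -> fs k X) (l : seq I) x :
  coef (flatten [seq F i | i <- l]) x = \sum_(i <- l) coef (F i) x.
Proof.
elim: l => [|i l IH] /=; first by rewrite coef_nil big_nil.
by rewrite coef_cat IH big_cons.
Qed.

Lemma fmul_fscalel (G : Type) c (s t : fs k (seq G)) :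
  fmul (fscale c s) t = fscale c (fmul s t).
Proof.
elim: s => [|a s IH] //; rewrite /fmul /= in IH *.
rewrite IH /fscale map_cat -!map_comp; congr (_ ++ _).
by apply: eq_map => b /=; rewrite mulrA.
Qed.

Lemma fs_eq_sym (X : eqType) (s t : fs k X) : fs_eq s t -> fs_eq t s.
Proof. by move=> E x; rewrite E. Qed.

Definition lincomb (I : finType) (X : Type) (c : I -> k) (x : I -> fs k X) : fs k X :=
  flatten [seq fscale (c i) (x i) | i <- enum I].

Lemma coef_lincomb (I : finType) (X : eqType) (c : I -> k) (x : I -> fs k X) w :
  coef (lincomb c x) w = \sum_i c i * coef (x i) w.
Proof.
rewrite /lincomb coef_flatten big_enum /=; apply: eq_bigr => i _; exact: coef_fscale.
Qed.

Section Ideal.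
Variables (G : eqType) (Rel : fs k (seq G) -> Prop).
Local Notation J := (in_ideal Rel).

Lemma in_ideal_eq x y : fs_eq x y -> J x -> J y.
Proof. by move=> Exy [l [Hl Hx]]; exists l; split=> // w; rewrite -Exy. Qed.

Lemma in_ideal_nil : J [::].
Proof. by exists [::]; split. Qed.

Lemma in_ideal_cat x y : J x -> J y -> J (x ++ y).
Proof.
move=> [l1 [H1 E1]] [l2 [H2 E2]]; exists (l1 ++ l2); split.
  by move=> t; rewrite mem_cat => /orP [/H1|/H2].
by move=> w; rewrite coef_cat map_cat flatten_cat coef_cat E1 E2.
Qed.

Lemma in_ideal_scale c x : J x -> J (fscale c x).
Proof.
move=> [l [Hl E]]; exists [seq ((fscale c t.1.1, t.1.2), t.2) | t <- l]; split.
  by move=> t /mapP [t' Ht' ->]; exact: (Hl _ Ht').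
move=> w; rewrite coef_fscale E -map_comp !coef_flatten mulr_sumr.
by apply: eq_bigr => t _ /=; rewrite !fmul_fscalel coef_fscale.
Qed.

Lemma in_ideal_rel A r B : Rel r -> J (fmul (fmul A r) B).
Proof.
move=> Hr; exists [:: (A, r, B)]; split; last by move=> w; rewrite /= cats0.
by move=> t; rewrite inE => /eqP ->.
Qed.

Lemma in_ideal_lincomb (I : finType) (c : I -> k) (x : I -> fs k (seq G)) :
  (forall i, J (x i)) -> J (lincomb c x).
Proof.
move=> H; rewrite /lincomb; elim: (enum I) => [|i l IH] /=; first exact: in_ideal_nil.
by apply: in_ideal_cat => //; apply: in_ideal_scale.
Qed.

Definition cong x y := J (fsub x y).

Lemma cong_fs_eq x x' y y' : fs_eq x x' -> fs_eq y y' -> cong x y -> cong x' y'.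
Proof. by move=> E1 E2; apply: in_ideal_eq => w; rewrite !coef_fsub E1 E2. Qed.

Lemma cong_refl x : cong x x.
Proof. by apply: in_ideal_eq in_ideal_nil => w; rewrite coef_fsub coef_nil subrr. Qed.

Lemma cong_trans x y z : cong x y -> cong y z -> cong x z.
Proof.
move=> H1 H2; apply: in_ideal_eq (in_ideal_cat H1 H2) => w.
by rewrite coef_cat !coef_fsub addrA subrK.
Qed.

Lemma cong_scale c x y : cong x y -> cong (fscale c x) (fscale c y).
Proof.
move=> H; apply: in_ideal_eq (in_ideal_scale c H) => w.
by rewrite coef_fscale !coef_fsub !coef_fscale mulrBr.
Qed.

Lemma cong_lincomb (I : finType) (c : I -> k) (x y : I -> fs k (seq G)) :
  (forall i, cong (x i) (y i)) -> cong (lincomb c x) (lincomb c y).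
Proof.
move=> H; apply: in_ideal_eq (in_ideal_lincomb c H) => w.
rewrite coef_fsub !coef_lincomb -sumrB; apply: eq_bigr => i _.
by rewrite coef_fsub mulrBr.
Qed.

Lemma in_ideal_cong0 x : cong x [::] -> J x.
Proof. by apply: in_ideal_eq => w; rewrite coef_fsub coef_nil subr0. Qed.

End Ideal.
End LinearCombinations.

Section Inversions.
Variable N : nat.

(* With c = 1 it is the length of s; with
   c the product of the parities of two letters it is a Koszul sign. *)
Definition winv (c : 'I_N -> 'I_N -> nat) (s : 'S_N) : nat :=
  (\sum_(x : 'I_N) \sum_(y : 'I_N | (x < y)%N && (s y < s x)%N) c (s x) (s y))%N.

Lemma tperm_adjacent_lt (i i' x y : 'I_N) : i' = i.+1 :> nat ->
  ~~ ((x == i) && (y == i')) -> ~~ ((x == i') && (y == i)) ->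
  (tperm i i' x < tperm i i' y)%N = (x < y)%N.
Proof.
by case: tpermP => [->|->|/eqP+ /eqP+]; case: tpermP => [->|->|/eqP+ /eqP+];
  rewrite -!val_eqE /=; lia.
Qed.

(* A permutation of 'I_N increasing on adjacent positions is the identity:
   its list of values is sorted and has the same elements as 0, ..., N-1. *)
Lemma increasing_perm1 (s : 'S_N) :
  (forall i i' : 'I_N, i' = i.+1 :> nat -> (s i < s i')%N) -> s = 1%g.
Proof.
move=> incr.
have sorted_s : sorted ltn [seq val (s x) | x <- enum 'I_N].
  apply/(sortedP 0%N) => i; rewrite size_map size_enum_ord => iN.
  have iN' : (i < N)%N by lia.
  rewrite !(nth_map (Ordinal iN') 0%N) ?size_enum_ord //; apply: incr.
  by rewrite !nth_enum_ord.
have mem_s : [seq val (s x) | x <- enum 'I_N] =i iota 0 N.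
  move=> n; rewrite mem_iota leq0n add0n; apply/mapP/idP => [[x _ ->]|nN].
    exact: ltn_ord.
  by exists ((s^-1)%g (Ordinal nN)); rewrite ?mem_enum ?permKV.
have := irr_sorted_eq ltn_trans ltnn sorted_s (iota_ltn_sorted 0 N) mem_s.
move=> E; apply/permP => x; apply: val_inj; rewrite perm1.
have := congr1 (fun l => nth 0%N l x) E.
by rewrite /= (nth_map x 0%N) ?size_enum_ord // nth_ord_enum nth_iota.
Qed.

Lemma winv_perm1 (c : 'I_N -> 'I_N -> nat) : winv c 1 = 0%N.
Proof.
rewrite /winv big1 // => x _; rewrite big_pred0 // => y; rewrite !perm1.
by case: ltngtP.
Qed.

Lemma adjacent_descent_or_increasing (s : 'S_N) :
  (exists i i' : 'I_N, i' = i.+1 :> nat /\ (s i' < s i)%N) \/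
  (forall i i' : 'I_N, i' = i.+1 :> nat -> (s i < s i')%N).
Proof.
pose desc := [pred ii : 'I_N * 'I_N | (ii.2 == ii.1.+1 :> nat) && (s ii.2 < s ii.1)%N].
case: (pickP desc) => [[i i'] /andP [/eqP Hi Hd]|none]; first by left; exists i, i'.
right=> i i' Hi.
have : ~~ (s i' < s i)%N by apply: contraFN (none (i, i')) => Hd; apply/andP; split=> //; apply/eqP.
rewrite -leqNgt leq_eqVlt => /orP [/eqP/val_inj/perm_inj Eii|//].
by move: Hi; rewrite Eii; lia.
Qed.

(* Undoing an adjacent descent removes exactly one weighted inversion: this
   drives the bubble-sort induction. *)
Lemma winv_adjacent (c : 'I_N -> 'I_N -> nat) (s : 'S_N) (i i' : 'I_N) :
  i' = i.+1 :> nat -> (s i' < s i)%N ->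
  winv c s = (winv c (tperm i i' * s) + c (s i) (s i'))%N.
Proof.
move=> Hi Hs; rewrite /winv; set t := tperm i i'.
have -> : (\sum_(x : 'I_N) \sum_(y : 'I_N | (x < y)%N && ((t * s)%g y < (t * s)%g x)%N)
             c ((t * s)%g x) ((t * s)%g y) =
           \sum_(x : 'I_N) \sum_(y : 'I_N | (t x < t y)%N && (s y < s x)%N) c (s x) (s y))%N.
  rewrite (reindex_inj (@perm_inj _ t)) /=; apply: eq_bigr => x _.
  rewrite (reindex_inj (@perm_inj _ t)) /=.
  by apply: eq_big => [y|y _]; rewrite !permM !tpermK.
have -> : (c (s i) (s i') =
           \sum_(x : 'I_N) \sum_(y : 'I_N | (x == i) && (y == i')) c (s x) (s y))%N.
  rewrite (bigD1 i) //= (big_pred1 i'); last by move=> y; rewrite eqxx.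
  by rewrite big1 ?addn0 // => x /negbTE Hx; rewrite big1 // => y; rewrite Hx.
rewrite -(big_split addn) /=; apply: eq_bigr => x _.
rewrite !(big_mkcond (fun y => _ && _)) -big_split /=; apply: eq_bigr => y _.
have [/andP [/eqP -> /eqP ->]|N1] := boolP ((x == i) && (y == i')).
  have [lt_ii' nlt_i'i] : (i < i')%N /\ (i' < i)%N = false by split; lia.
  by rewrite /t tpermL tpermR Hs lt_ii' nlt_i'i.
have [/andP [/eqP -> /eqP ->]|N2] := boolP ((x == i') && (y == i)).
  by rewrite /t tpermL tpermR [(s i < _)%N]ltnNge (ltnW Hs) !andbF.
by rewrite tperm_adjacent_lt // addn0.
Qed.

Lemma map_enum_tperm (X : Type) (F : 'I_N -> X) (i i' : 'I_N) :
  i' = i.+1 :> nat ->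
  exists u u', [seq F x | x <- enum 'I_N] = u ++ F i :: F i' :: u' /\
    [seq F (tperm i i' x) | x <- enum 'I_N] = u ++ F i' :: F i :: u'.
Proof.
move=> Hi; have [s1 [s2 He]] : exists s1 s2, enum 'I_N = s1 ++ i :: i' :: s2.
  exists (take i (enum 'I_N)), (drop i.+2 (enum 'I_N)).
  have Hs : size (enum 'I_N) = N by rewrite size_enum_ord.
  rewrite -{1}(cat_take_drop i (enum 'I_N)) (drop_nth i) ?Hs // (drop_nth i) ?Hs -?Hi //.
  by rewrite !nth_ord_enum.
exists [seq F x | x <- s1], [seq F x | x <- s2].
rewrite He !map_cat /= tpermL tpermR; split=> //.
have := enum_uniq 'I_N; rewrite He cat_uniq !cons_uniq !inE !negb_or.
case/and5P=> _ /and3P [Ni1 Ni'1 _] /andP [_ Ni2] Ni'2 _.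
have map_fixed (s : seq 'I_N) : i \notin s -> i' \notin s ->
    [seq F (tperm i i' x) | x <- s] = [seq F x | x <- s].
  move=> Ni Ni'; apply/eq_in_map => x Hx; congr F.
  by rewrite tpermD //; [apply: contraNneq Ni|apply: contraNneq Ni'] => ->.
by rewrite !map_fixed.
Qed.
End Inversions.

Section Reordering.
Variables (k : fieldType) (d N : nat) (p : 'I_d -> bool).
Local Notation G := (Gen d).
Local Notation congO := (@cong k _ (@Rel_O k d p)).

Lemma swap_adjacent (u u' : seq G) (g h : G) :
  congO [:: (1, u ++ g :: h :: u')]
        [:: ((-1) ^+ (parG p g && parG p h), u ++ h :: g :: u')].
Proof.
set e := (-1) ^+ _.
have Hrel : Rel_O p (fsub (fmul (gen k g) (gen k h)) (fscale e (fmul (gen k h) (gen k g)))).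
  by left; exists g, h.
apply: in_ideal_eq (in_ideal_rel [:: (1, u)] [:: (1, u')] Hrel) => w.
by rewrite /fmul /fsub /fscale /gen /coef /= -!catA !mul1r !mulr1.
Qed.

Definition monomial (F : 'I_N -> G) : seq G := [seq F x | x <- enum 'I_N].

Definition koszul (s : 'S_N) (F : 'I_N -> G) : nat :=
  winv (fun a b => (parG p (F a) && parG p (F b) : nat)) s.

(* In a supercommutative algebra, permuting the letters of a monomial
   costs the Koszul sign.  Induction on the number of inversions of s,
   removing an adjacent descent at each step. *)
Lemma reorder_monomial (F : 'I_N -> G) (s : 'S_N) :
  congO [:: (1, monomial (fun x => F (s x)))] [:: ((-1) ^+ koszul s F, monomial F)].
Proof.
have base (s1 : 'S_N) : s1 = 1%g ->
    congO [:: (1, monomial (fun x => F (s1 x)))] [:: ((-1) ^+ koszul s1 F, monomial F)].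
  move=> ->; rewrite /koszul winv_perm1 expr0.
  have -> : monomial (fun x => F ((1 : 'S_N)%g x)) = monomial F.
    by apply: eq_map => x; rewrite perm1.
  exact: cong_refl.
move: {2}(winv (fun _ _ => 1%N) s) (leqnn (winv (fun _ _ => 1%N) s)) => n.
elim: n s => [|n IH] s Hn;
  case: (adjacent_descent_or_increasing s) => [[i [i' [Hi Hd]]]|/increasing_perm1/base //].
  by move: Hn; rewrite (winv_adjacent _ Hi Hd) addn1.
pose s' := (tperm i i' * s)%g.
have Hn' : (winv (fun _ _ => 1%N) s' <= n)%N.
  by move: Hn; rewrite (winv_adjacent _ Hi Hd) addn1.
have [u [u' [E1 E2]]] := map_enum_tperm (fun x => F (s x)) Hi.
have E3 : monomial (fun x => F (s' x)) = u ++ F (s i') :: F (s i) :: u'.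
  by rewrite -E2; apply: eq_map => x; rewrite /s' permM.
rewrite {1}/monomial E1; apply: cong_trans (swap_adjacent u u' _ _) _.
have := cong_scale ((-1) ^+ (parG p (F (s i)) && parG p (F (s i')))) (IH s' Hn').
rewrite E3 /fscale /= mulr1 -exprD.
by rewrite /koszul (winv_adjacent _ Hi Hd) addnC.
Qed.
End Reordering.

Section Symmetrizer.
Variables (k : fieldType) (d N : nat) (p : 'I_d -> bool).
Local Notation W := (Word d N).
Local Notation sp := (@sgn_perm k d N p).

(* c_sigma sends the basis tensor of the word w to +-(the word permw s w). *)
Definition permw (s : 'S_N) (w : W) : W := [ffun j => w ((s^-1)%g j)].

Lemma permwK (s : 'S_N) : cancel (permw s) (permw s^-1).
Proof. by move=> w; apply/ffunP => i; rewrite !ffunE invgK permK. Qed.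

Lemma permw_inj (s : 'S_N) : injective (permw s).
Proof. exact: can_inj (permwK s). Qed.

Definition sgn (s : 'S_N) : k := (-1) ^+ odd_perm s.

(* The order-reversing permutation i |-> N-1-i; conjugation by it relates
   the symmetrizer to the reversed pairing <f, v_N (x) ... (x) v_1>. *)
Definition rho : 'S_N := perm (@rev_ord_inj N).

Lemma rhoK : involutive rho.
Proof. by move=> x; rewrite !permE rev_ordK. Qed.

Lemma rhoV : (rho^-1)%g = rho.
Proof. by apply/permP => x; rewrite -{1}(rhoK x) permK. Qed.

Lemma rho_lt (x y : 'I_N) : (rho x < rho y)%N = (y < x)%N.
Proof. rewrite !permE /=; have := ltn_ord x; have := ltn_ord y; lia. Qed.

Lemma revw_rho (a : W) : revw a = [ffun i => a (rho i)].
Proof. by apply/ffunP => i; rewrite !ffunE permE. Qed.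

Lemma revwK : involutive (@revw d N).
Proof. by move=> a; apply/ffunP => i; rewrite !ffunE rev_ordK. Qed.

Lemma sgn_perm_conj (t : 'S_N) (u : W) : sp (rho * t * rho)%g (revw u) = sp t u.
Proof.
rewrite /sgn_perm; congr (_ ^+ _).
rewrite (reindex_inj (@perm_inj _ rho)) /=.
rewrite (eq_bigr (fun i : 'I_N => \sum_(j : 'I_N | (j < i)%N && (t i < t j)%N)
                   (p (u i) && p (u j)))%N); last first.
  move=> i _; rewrite (reindex_inj (@perm_inj _ rho)) /=.
  apply: eq_big => [j|j _]; first by rewrite !permM !rhoK !rho_lt.
  by rewrite revw_rho !ffunE !rhoK.
rewrite (eq_bigr (fun i : 'I_N => \sum_(j : 'I_N) if (j < i)%N && (t i < t j)%N
                   then (p (u i) && p (u j) : nat) else 0%N)); last first.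
  by move=> i _; rewrite big_mkcond.
rewrite exchange_big /=; apply: eq_bigr => i _; rewrite [RHS]big_mkcond.
by apply: eq_bigr => j _; rewrite [p (u j) && _]andbC.
Qed.

Lemma permw_conj (t : 'S_N) (u : W) : revw (permw (rho * t * rho)%g (revw u)) = permw t u.
Proof.
apply/ffunP => i; rewrite !revw_rho /permw !ffunE !invMg rhoV !permM rhoK.
by rewrite rhoK.
Qed.

Lemma sgn_conj (t : 'S_N) : sgn (rho * t * rho)%g = sgn t.
Proof. by rewrite /sgn !odd_permM addbC addbA addbb. Qed.

Lemma cperm_delta (s : 'S_N) (u b : W) :
  cperm p s [ffun w => (w == u)%:R] b = if b == permw s u then sp s u else 0.
Proof.
rewrite ffunE (bigD1 u) //= big1 => [|w Hw]; first by rewrite ffunE eqxx mulr1 addr0.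
by rewrite ffunE (negbTE Hw) mulr0; case: ifP.
Qed.

(* An element of R^perp is orthogonal to the symmetrization of a basis
   tensor: pairing it with c_{Y_N}(x_{rev u}) gives the sum below. *)
Lemma Rperp_symmetrizer (f : Ten k d N) (u : W) : inRperp p f ->
  \sum_(s : 'S_N) (N`!%:R)^-1 * (sgn s * (sp s u * f (permw s u))) = 0.
Proof.
move=> Hf; pose t0 : Ten k d N := [ffun w => (w == revw u)%:R].
apply: etrans (Hf (cY p t0) (ex_intro _ t0 erefl)); rewrite /pairing.
under [RHS]eq_bigr => a _ do rewrite /cY ffunE big_distrr /= big_distrr /=.
have conj_inj : injective (fun t : 'S_N => (rho * t * rho)%g).
  by move=> a b E; apply: (mulgI rho); apply: (mulIg rho).
rewrite exchange_big /= [RHS](reindex_inj conj_inj) /=; apply: eq_bigr => t _.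
rewrite (bigD1 (permw t u)) //= big1 ?addr0 => [|a Ha]; last first.
  rewrite cperm_delta; case: eqP => [E|_]; last by rewrite !mulr0.
  by move: Ha; rewrite -(permw_conj t u) -E revwK eqxx.
rewrite cperm_delta -(permw_conj t u) revwK eqxx sgn_perm_conj -/(sgn _) sgn_conj.
by rewrite [RHS]mulrC -!mulrA.
Qed.
End Symmetrizer.

Section Parity.
Variable N : nat.

Lemma even_sum (I : finType) (F : I -> nat) :
  (forall i, ~~ odd (F i)) -> ~~ odd (\sum_i F i)%N.
Proof.
move=> H; apply: (big_ind (fun n => ~~ odd n)) => // a b Ha Hb.
by rewrite oddD (negbTE Ha) (negbTE Hb).
Qed.

Lemma even_double_sum (F : 'I_N -> 'I_N -> nat) :
  (forall x y : 'I_N, (x < y)%N -> ~~ odd (F x y + F y x)%N) ->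
  (forall x, ~~ odd (F x x)) -> ~~ odd (\sum_(x : 'I_N) \sum_(y : 'I_N) F x y)%N.
Proof.
move=> Hxy Hxx.
have -> : (\sum_(x : 'I_N) \sum_(y : 'I_N) F x y =
           \sum_(x : 'I_N) \sum_(y : 'I_N) (if (x < y)%N then F x y else 0) +
           \sum_(x : 'I_N) \sum_(y : 'I_N) (if (x < y)%N then F y x else 0) +
           \sum_(x : 'I_N) \sum_(y : 'I_N) (if x == y then F x y else 0))%N.
  rewrite [in X in (_ + X + _)%N]exchange_big -!big_split /=.
  apply: eq_bigr => x _; rewrite -!big_split /=; apply: eq_bigr => y _.
  have [->|nxy] := eqVneq x y; first by rewrite ltnn.
  case: (ltngtP x y) => H; rewrite ?addn0 ?add0n //.
  by move: nxy; rewrite -val_eqE /= H eqxx.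
rewrite -big_split /= oddD (negbTE (even_sum _)) => [|x]; last first.
  by rewrite -big_split; apply: even_sum => y /=; case: ifP => H; [apply: Hxy|].
rewrite (negbTE (even_sum _)) // => x.
by apply: even_sum => y; case: eqP => [->|]; [apply: Hxx|].
Qed.
End Parity.

Section SignIdentity.
Variables (k : fieldType) (d N : nat) (p : 'I_d -> bool).
Local Notation W := (Word d N).
Local Notation sp := (@sgn_perm k d N p).

(* The signs met when rewriting the relation: the sign of c_sigma on w, the
   sign of c_{pi_N} on the permuted words, and the Koszul sign of moving the
   generators z^{u x}_{w x} back into place, multiply to the sign of
   c_sigma on u times the sign of c_{pi_N} on (u, w).  Writing P, Q for the
   parities of the letters of u, w, the five exponents are double sums whose
   symmetric pairs are even, which is a truth table check. *)
Lemma sign_identity (s : 'S_N) (u w : W) :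
  sp s w * sgn_pi k p (permw s u) (permw s w) *
    (-1) ^+ koszul p (s^-1)%g (fun x => (u x, w x)) =
  sp s u * sgn_pi k p u w.
Proof.
pose Q x := p (w x); pose P x := p (u x); pose R x := P x (+) Q x.
pose T1 (x y : 'I_N) := if (x < y)%N && (s y < s x)%N then (Q x && Q y : nat) else 0%N.
pose T2 (x y : 'I_N) := if (s x < s y)%N then (Q x && P y : nat) else 0%N.
pose T3 (x y : 'I_N) := if (s x < s y)%N && (y < x)%N then (R x && R y : nat) else 0%N.
pose T4 (x y : 'I_N) := if (x < y)%N && (s y < s x)%N then (P x && P y : nat) else 0%N.
pose T5 (x y : 'I_N) := if (x < y)%N then (Q x && P y : nat) else 0%N.
have e1 : (\sum_(i : 'I_N) \sum_(j : 'I_N | (i < j)%N && (s j < s i)%N)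
             (p (w i) && p (w j)) = \sum_x \sum_y T1 x y)%N.
  by apply: eq_bigr => x _; rewrite big_mkcond.
have e2 : (\sum_(i : 'I_N) \sum_(j : 'I_N | (i < j)%N)
             (p (permw s w i) && p (permw s u j)) = \sum_x \sum_y T2 x y)%N.
  rewrite (reindex_inj (@perm_inj _ s)) /=; apply: eq_bigr => x _.
  rewrite (reindex_inj (@perm_inj _ s)) /= big_mkcond; apply: eq_bigr => y _.
  by rewrite !ffunE !permK.
have e3 : koszul p (s^-1)%g (fun x => (u x, w x)) = (\sum_x \sum_y T3 x y)%N.
  rewrite /koszul /winv (reindex_inj (@perm_inj _ s)) /=; apply: eq_bigr => x _.
  rewrite (reindex_inj (@perm_inj _ s)) /= big_mkcond; apply: eq_bigr => y _.
  by rewrite !permK /T3 andbC.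
have e4 : (\sum_(i : 'I_N) \sum_(j : 'I_N | (i < j)%N && (s j < s i)%N)
             (p (u i) && p (u j)) = \sum_x \sum_y T4 x y)%N.
  by apply: eq_bigr => x _; rewrite big_mkcond.
have e5 : (\sum_(i : 'I_N) \sum_(j : 'I_N | (i < j)%N) (p (w i) && p (u j))
           = \sum_x \sum_y T5 x y)%N.
  by apply: eq_bigr => x _; rewrite big_mkcond.
rewrite /sgn_perm /sgn_pi e1 e2 e3 e4 e5 -!exprD -[LHS]signr_odd -[RHS]signr_odd.
congr (_ ^+ _).
have : ~~ odd (\sum_x \sum_y (T1 x y + T2 x y + T3 x y + (T4 x y + T5 x y)))%N.
  apply: even_double_sum => [x y lt_xy|x]; last by rewrite /T1 /T2 /T3 /T4 /T5 !ltnn.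
  have ne_sxy : (s x != s y :> nat).
    by rewrite val_eqE (inj_eq perm_inj); apply: contraTneq lt_xy => ->; rewrite ltnn.
  have lt_sxy : (s x < s y)%N = ~~ (s y < s x)%N by rewrite ltn_neqAle -leqNgt ne_sxy.
  rewrite /T1 /T2 /T3 /T4 /T5 lt_sxy lt_xy [(y < x)%N]ltnNge (ltnW lt_xy) /= /R.
  by case: (s y < s x)%N; case: (P x); case: (P y); case: (Q x); case: (Q y).
under eq_bigr => x _ do rewrite !big_split /=.
rewrite !big_split /= oddD.
by case: (odd (_ + _ + _)); case: (odd (_ + _)).
Qed.
End SignIdentity.

Lemma big_triple (R : Type) (idx : R) (op : Monoid.com_law idx)
    (I J K : finType) (F : I * J * K -> R) :
  \big[op/idx]_(x : I * J * K) F x =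
  \big[op/idx]_(i : I) \big[op/idx]_(j : J) \big[op/idx]_(l : K) F (i, j, l).
Proof. by rewrite pair_bigA pair_bigA; apply: eq_bigr => [[[]]]. Qed.

Section Relations.
Variables (k : fieldType) (d N : nat) (p : 'I_d -> bool) (f t : Ten k d N).
Local Notation W := (Word d N).
Local Notation sp := (@sgn_perm k d N p).
Local Notation congO := (@cong k _ (@Rel_O k d p)).

Lemma cY_coord (b : W) : cY p t b =
  \sum_(s : 'S_N) \sum_(w : W)
     (if b == permw s w then (N`!%:R)^-1 * (sgn k s * (sp s w * t w)) else 0).
Proof.
rewrite /cY ffunE mulr_sumr; apply: eq_bigr => s _.
rewrite /cperm ffunE !mulr_sumr; apply: eq_bigr => w _.
by case: ifP; rewrite ?mulr0.
Qed.

(* The relation c_{pi_N}(f (x) c_{Y_N} t) as a linear combination of the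
   monomials z_{s u, s w}, indexed by triples (u, s, w). *)
Definition rel_coef (u : W) (s : 'S_N) (w : W) : k :=
  f (permw s u) * ((N`!%:R)^-1 * (sgn k s * (sp s w * t w))) *
  sgn_pi k p (permw s u) (permw s w).

Lemma cpi_cY_expand :
  fs_eq (cpi p f (cY p t))
    (lincomb (fun i : W * 'S_N * W => rel_coef i.1.1 i.1.2 i.2)
             (fun i => [:: (1, zword (permw i.1.2 i.1.1) (permw i.1.2 i.2))])).
Proof.
move=> m; rewrite coef_lincomb big_triple [LHS]/coef /cpi big_allpairs_dep /= big_enum /=.
transitivity (\sum_(a : W) \sum_(s : 'S_N) \sum_(w : W)
  (if zword a (permw s w) == m then
     f a * ((N`!%:R)^-1 * (sgn k s * (sp s w * t w))) * sgn_pi k p a (permw s w)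
   else 0)).
  apply: eq_bigr => a _; rewrite big_enum /=.
  transitivity (\sum_(b : W) \sum_(s : 'S_N) \sum_(w : W) (if b == permw s w then
      (if zword a b == m then
         f a * ((N`!%:R)^-1 * (sgn k s * (sp s w * t w))) * sgn_pi k p a b
       else 0) else 0)).
    apply: eq_bigr => b _; case: ifP => _; last first.
      by rewrite big1 // => s _; rewrite big1 // => w _; rewrite if_same.
    rewrite cY_coord mulr_sumr mulr_suml; apply: eq_bigr => s _.
    rewrite mulr_sumr mulr_suml; apply: eq_bigr => w _.
    by case: ifP; rewrite ?mulr0 ?mul0r.
  rewrite exchange_big /=; apply: eq_bigr => s _.
  rewrite exchange_big /=; apply: eq_bigr => w _.
  by rewrite -big_mkcond big_pred1_eq.
rewrite exchange_big [RHS]exchange_big /=; apply: eq_bigr => s _.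
rewrite (reindex_inj (@permw_inj _ _ s)) /=; apply: eq_bigr => u _.
apply: eq_bigr => w _; rewrite coef_single.
by case: ifP; rewrite ?mulr1 ?mulr0.
Qed.

Lemma cpi_cY_reorder :
  congO (lincomb (fun i : W * 'S_N * W => rel_coef i.1.1 i.1.2 i.2)
                 (fun i => [:: (1, zword (permw i.1.2 i.1.1) (permw i.1.2 i.2))]))
        (lincomb (fun i : W * 'S_N * W => rel_coef i.1.1 i.1.2 i.2)
                 (fun i => [:: ((-1) ^+ koszul p (i.1.2^-1)%g (fun x => (i.1.1 x, i.2 x)),
                                zword i.1.1 i.2)])).
Proof.
apply: cong_lincomb => [[[u s] w]] /=.
have -> : zword (permw s u) (permw s w) = monomial (fun x => (u ((s^-1)%g x), w ((s^-1)%g x))).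
  by apply: eq_map => x; rewrite !ffunE.
exact: reorder_monomial.
Qed.

(* After reordering, the coefficient of z_{u, w} is, by the sign identity,
   t_w sgn_pi(u, w) times the symmetrization sum of f at u, which vanishes
   for f in R^perp. *)
Lemma reordered_relation_vanishes : inRperp p f ->
  fs_eq (lincomb (fun i : W * 'S_N * W => rel_coef i.1.1 i.1.2 i.2)
                 (fun i => [:: ((-1) ^+ koszul p (i.1.2^-1)%g (fun x => (i.1.1 x, i.2 x)),
                                zword i.1.1 i.2)])) [::].
Proof.
move=> Hf m; rewrite coef_lincomb coef_nil big_triple.
have coef_uw u s w : rel_coef u s w * coef [:: ((-1) ^+ koszul p (s^-1)%g
      (fun x => (u x, w x)), zword u w)] m =
    (zword u w == m)%:R * (t w * sgn_pi k p u w) *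
    ((N`!%:R)^-1 * (sgn k s * (sp s u * f (permw s u)))).
  rewrite coef_single; case: ifP => _; last by rewrite mulr0 !mul0r.
  transitivity ((N`!%:R)^-1 * sgn k s * f (permw s u) * t w *
    (sp s w * sgn_pi k p (permw s u) (permw s w) *
     (-1) ^+ koszul p (s^-1)%g (fun x => (u x, w x)))); first by rewrite /rel_coef; ring.
  by rewrite sign_identity /=; ring.
under eq_bigr => u _ do under eq_bigr => s _ do rewrite (eq_bigr _ (fun w _ => coef_uw u s w)).
apply: big1 => u _; rewrite exchange_big; apply: big1 => w _.
by rewrite -mulr_sumr Rperp_symmetrizer ?mulr0.
Qed.
End Relations.

Lemma Rel_end_in_ideal (k : fieldType) (d N : nat) (p : 'I_d -> bool) (r : fs k (seq (Gen d))) :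
  Rel_end N p r -> in_ideal (@Rel_O k d p) r.
Proof.
move=> [f [v [Hf [t ->] ->]]].
apply: in_ideal_eq (fs_eq_sym (cpi_cY_expand p f t)) _; apply: in_ideal_cong0.
apply: cong_trans (cpi_cY_reorder p f t) _.
exact: cong_fs_eq (fun _ => erefl) (reordered_relation_vanishes t Hf) (cong_refl _ _).
Qed.

Section IdentityOnGenerators.
Variables (k : fieldType) (G : eqType).

Lemma foldr_fmul_gen (w : seq G) :
  foldr (fun g acc => fmul (gen k g) acc) (fone k G) w = [:: (1, w)].
Proof. by elim: w => //= g w ->; rewrite /fmul /gen /= mul1r. Qed.

Lemma phi_ext_gen (s : fs k (seq G)) : phi_ext (@gen k G) s = s.
Proof.
rewrite /phi_ext; elim: s => //= [[c w] s] IH.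
by rewrite foldr_fmul_gen /fscale /= mulr1 IH.
Qed.

Lemma phiphi_gen (s : fs k (seq G * seq G)) : phiphi (@gen k G) s = s.
Proof.
rewrite /phiphi; elim: s => [|[c [w1 w2]] s IH] //=.
by rewrite IH /phi_ext /= !foldr_fmul_gen /fscale /ftens /= !mulr1.
Qed.

Lemma tmul_tone (par : G -> bool) (s : fs k (seq G * seq G)) :
  tmul par s (tone k G) = s.
Proof.
elim: s => //= [[c [w1 w2]] s] IH; rewrite /tmul /= in IH *.
by rewrite IH andbF expr0 mul1r mulr1 !cats0.
Qed.

Lemma Dext_gen (par : G -> bool) (D : G -> fs k (seq G * seq G)) (g : G) :
  Dext par D (gen k g) = D g.
Proof.
rewrite /Dext /gen /= cats0 tmul_tone /fscale.
by elim: (D g) => //= [[c w] s] ->; rewrite mul1r.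
Qed.

Lemma eext_gen (e : G -> k) (g : G) : eext e (gen k g) = e g.
Proof. by rewrite /eext /gen !big_cons !big_nil addr0 mul1r mulr1. Qed.

(* The only word in the support of a generator is the generator itself. *)
Lemma parw_gen_support (par : G -> bool) (g : G) (w : seq G) :
  coef (gen k g) w != 0 -> parw par w = par g.
Proof. by rewrite coef_single; case: ifP => [/eqP <- _ /=|_]; rewrite ?addbF ?eqxx. Qed.

Lemma in_ideal2_sub_self (Rel : fs k (seq G) -> Prop) (x : fs k (seq G * seq G)) :
  in_ideal2 Rel (fsub x x).
Proof.
exists [::], [::]; split=> [t|]; first by rewrite in_nil.
by split=> [t|w]; rewrite ?in_nil // coef_fsub subrr coef_nil.
Qed.
End IdentityOnGenerators.

Lemma coact_restr_gen (k : fieldType) (d : nat) (j : 'I_d) :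
  coact_restr (@gen k (Gen d)) j = coact_target k j.
Proof. by rewrite /coact_restr /coact_target; elim: (enum 'I_d) => //= i l ->. Qed.

(* This direction does not use the hypothesis on the characteristic. *)
Theorem mainTheorem17 (k : fieldType) (d N : nat) (p : 'I_d -> bool) :
  (forall q : nat, q \in [pchar k] -> (N < q)%N) ->
  exists phi : Gen d -> fs k (seq (Gen d)),
    [/\ forall g : Gen d, fs_eq (phi g) (gen k g),
        is_sbialg_hom (parG p) (parG p) (@Rel_end k d N p) (@Rel_O k d p)
          (@DeltaGen k d) (@DeltaGen k d) (@epsGen k d) (@epsGen k d) phi
      & forall j : 'I_d, fs_eq (coact_restr phi j) (coact_target k j)].
Proof.
move=> _; exists (@gen k (Gen d)); split=> // [|j]; last by rewrite coact_restr_gen.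
split=> [g w|r /Rel_end_in_ideal|g|g].
- exact: parw_gen_support.
- by rewrite phi_ext_gen.
- by rewrite Dext_gen phiphi_gen; exact: in_ideal2_sub_self.
- exact: eext_gen.
Qed.
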